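(* Let $s\in(0,1)$ and suppose the jump kernels $j_1^{(n)}$ satisfy the upper bound with this $s$. Then for every $u\in\operatorname{Lip}([0,1])$, $\widetilde{\mathcal{E}}_1^{(\infty)}(u)=\mathcal{E}_1^{(\infty)}(u)$.
   Context: Index graph: vertices $\mathbb{N}$; vertex $i$ has edges $e_{i,2i-2}$ to $2i-2$ (only if $i\ge2$), $e_{i,2i-1},e'_{i,2i-1}$ to $2i-1$, $e_{i,2i}$ to $2i$, weights $r_e>0$ with $r_{e_{i,2i-1}}=r_{e'_{i,2i-1}}$. For $e$ from $i$ to $j$, $\phi_e(x)=\frac{j}{2i}x+s_e$, $s_e=0$ for $e\in\{e_{i,2i-1},e_{i,2i}\}$, $s_e=\frac1{2i}$ for $e\in\{e_{i,2i-2},e'_{i,2i-1}\}$. $E_1^{(n)}$: paths $\sigma=e_1\cdots e_n$ of length $n$ from vertex $1$; $\phi_\sigma=\phi_{e_1}\circ\cdots\circ\phi_{e_n}$, $\delta_\sigma=r_{e_1}\cdots r_{e_n}$. $V_1^{(n)}=\{k/2^n\}_{k=0}^{2^n}$; the wires $\{\phi_\sigma(0),\phi_\sigma(1)\}$, $\sigma\in E_1^{(n)}$, are all pairs of distinct points of $V_1^{(n)}$, each with a unique path $\sigma^{(n)}_{x,y}$. $U_1^{(n)}(x)=[x-2^{-n-1},x+2^{-n-1})\cap[0,1]$, $\mu_1^{(n)}(x)=|U_1^{(n)}(x)|$. Kernel $j_1^{(n)}(x,y)=(\delta_{\sigma^{(n)}_{x,y}}\mu_1^{(n)}(x)\mu_1^{(n)}(y))^{-1}$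 for $x\ne y$, $0$ for $x=y$. $\mathcal{E}_1^{(n)}(u)=\sum_{x,y\in V_1^{(n)}}(u(x)-u(y))^2j_1^{(n)}(x,y)\mu_1^{(n)}(x)\mu_1^{(n)}(y)$. Upper bound: there is $\Lambda_1>0$ with $0<j_1^{(n)}(x,y)\le\Lambda_1|x-y|^{-1-2s}$ for all $n\ge0$ and distinct $x,y\in V_1^{(n)}$. $\mathcal{E}_1^{(\infty)}(u)=\lim_n\mathcal{E}_1^{(n)}(u|_{V_1^{(n)}})$; $\operatorname{Avg}_1^{(n)}u(\bar x)=\frac1{|U_1^{(n)}(\bar x)|}\int_{U_1^{(n)}(\bar x)}u\,dx$; $\widetilde{\mathcal{E}}_1^{(\infty)}(u)=\lim_n\mathcal{E}_1^{(n)}(\operatorname{Avg}_1^{(n)}u)$. *)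

From Stdlib Require Import Reals Lra List ClassicalEpsilon.
From Coquelicot Require Import Coquelicot.
Import ListNotations.
Open Scope R_scope.

(* Edge types out of a vertex i of the index graph:
   Edown  = e_{i,2i-2} (exists only if i >= 2),
   Eodd   = e_{i,2i-1},  Eodd' = e'_{i,2i-1},  Eeven = e_{i,2i}. *)
Inductive etype := Edown | Eodd | Eodd' | Eeven.

Definition etarget (i : nat) (t : etype) : nat :=
  match t with
  | Edown => 2 * i - 2
  | Eodd | Eodd' => 2 * i - 1
  | Eeven => 2 * i
  end.

Definition edge_exists (i : nat) (t : etype) : Prop :=
  (1 <= i)%nat /\ (t = Edown -> (2 <= i)%nat).

Definition eshift (i : nat) (t : etype) : R :=
  match t with
  | Edown | Eodd' => / (2 * INR i)
  | Eodd | Eeven => 0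
  end.

Definition phi_e (i : nat) (t : etype) (x : R) : R :=
  INR (etarget i t) / (2 * INR i) * x + eshift i t.

Fixpoint valid_path (v : nat) (p : list etype) : Prop :=
  match p with
  | [] => True
  | t :: p' => edge_exists v t /\ valid_path (etarget v t) p'
  end.

Fixpoint phi_path (v : nat) (p : list etype) (x : R) : R :=
  match p with
  | [] => x
  | t :: p' => phi_e v t (phi_path (etarget v t) p' x)
  end.

Fixpoint delta_path (r : nat -> etype -> R) (v : nat) (p : list etype) : R :=
  match p with
  | [] => 1
  | t :: p' => r v t * delta_path r (etarget v t) p'
  end.

Definition wire_path (n : nat) (x y : R) (p : list etype) : Prop :=
  valid_path 1 p /\ length p = n /\
  ((phi_path 1 p 0 = x /\ phi_path 1 p 1 = y) \/
   (phi_path 1 p 0 = y /\ phi_path 1 p 1 = x)).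

Definition sigma_xy (n : nat) (x y : R) : list etype :=
  epsilon (inhabits []) (wire_path n x y).

(* U_1^{(n)}(x) = [x - 2^{-n-1}, x + 2^{-n-1}) /\ [0,1];  its endpoints *)
Definition hw (n : nat) : R := / 2 ^ (S n).
Definition Ulo (n : nat) (x : R) : R := Rmax (x - hw n) 0.
Definition Uhi (n : nat) (x : R) : R := Rmin (x + hw n) 1.
Definition mu (n : nat) (x : R) : R := Rmax (Uhi n x - Ulo n x) 0.

Definition jker (r : nat -> etype -> R) (n : nat) (x y : R) : R :=
  if Req_EM_T x y then 0
  else / (delta_path r 1 (sigma_xy n x y) * mu n x * mu n y).

Definition vpt (n k : nat) : R := INR k / 2 ^ n.

Definition Energy (r : nat -> etype -> R) (n : nat) (f : R -> R) : R :=
  sum_n_m (fun k =>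
    sum_n_m (fun l =>
      (f (vpt n k) - f (vpt n l)) ^ 2 * jker r n (vpt n k) (vpt n l)
        * mu n (vpt n k) * mu n (vpt n l)) 0 (2 ^ n)) 0 (2 ^ n).

Definition Avg (n : nat) (u : R -> R) (x : R) : R :=
  / mu n x * RInt u (Ulo n x) (Uhi n x).

Definition kernel_upper_bound (r : nat -> etype -> R) (s : R) : Prop :=
  exists Lam : R, 0 < Lam /\
    forall (n k l : nat), (k <= 2 ^ n)%nat -> (l <= 2 ^ n)%nat -> k <> l ->
      0 < jker r n (vpt n k) (vpt n l) /\
      jker r n (vpt n k) (vpt n l)
        <= Lam * Rpower (Rabs (vpt n k - vpt n l)) (-1 - 2 * s).

Definition Lip01 (u : R -> R) : Prop :=
  exists L : R, forall x y, 0 <= x <= 1 -> 0 <= y <= 1 ->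
    Rabs (u x - u y) <= L * Rabs (x - y).

From Stdlib Require Import Reals Lra Lia.
From Coquelicot Require Import Coquelicot.
Open Scope R_scope.

(* Averaging over U(x), an interval of length at most h = 2^-n around x, moves an
   L-Lipschitz u by at most L h / 2.  For grid points x <> y at distance d = |k - l| h,
   the increments a of Avg u and b of u satisfy |a^2 - b^2| <= |a - b| |a + b| <= 3 L^2 h d;
   with j <= Lam d^(-1-2s) and mu <= h, the corresponding terms of the two energies differ
   by at most 3 L^2 Lam h^3 d^(-2s) <= 3 L^2 Lam h^(3-2s) |k - l|^(-s).  Comparing
   sum_m m^(-s) with the integral of t^(-s), a row of N + 1 = 2^n + 1 such terms is
   O(N^(1-s) / (1 - s)), so the energies differ by O(h^(1-s)) = O(2^((s-1) n)) -> 0 and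
   have the same limit in the extended reals. *)

Lemma sum_n_m_Sm_R (a : nat -> R) (N : nat) :
  sum_n_m a 0 (S N) = sum_n_m a 0 N + a (S N).
Proof. rewrite sum_n_Sm; [reflexivity|lia]. Qed.

Lemma Rabs_sum_n_m_sub_le (a b c : nat -> R) (N : nat) :
  (forall k, (k <= N)%nat -> Rabs (a k - b k) <= c k) ->
  Rabs (sum_n_m a 0 N - sum_n_m b 0 N) <= sum_n_m c 0 N.
Proof.
  induction N as [|N IH]; intro habc.
  - rewrite !sum_n_n. apply habc; lia.
  - rewrite !sum_n_m_Sm_R.
    replace (_ - _) with ((sum_n_m a 0 N - sum_n_m b 0 N) + (a (S N) - b (S N))) by ring.
    eapply Rle_trans; [apply Rabs_triang|].
    apply Rplus_le_compat; [apply IH; intros; apply habc|apply habc]; lia.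
Qed.

Lemma sum_n_m_telescope (H : nat -> R) (N : nat) :
  sum_n_m (fun l => H (S l) - H l) 0 N = H (S N) - H 0%nat :> R.
Proof.
  induction N as [|N IH].
  - now rewrite sum_n_n.
  - rewrite sum_n_m_Sm_R, IH. ring.
Qed.

Lemma is_lim_seq_sub_0_iff (a b : nat -> R) (l : Rbar) :
  is_lim_seq (fun n => a n - b n) 0 -> (is_lim_seq a l <-> is_lim_seq b l).
Proof.
  intro hab.
  assert (hl : is_Rbar_plus l 0 l).
  { destruct l; unfold is_Rbar_plus; simpl; rewrite ?Rplus_0_r; reflexivity. }
  split; intro hlim.
  - apply (is_lim_seq_ext (fun n => a n + - (a n - b n))); [intro; ring|].
    apply (is_lim_seq_plus _ _ l 0); [exact hlim| |exact hl].
    replace (Finite 0) with (Rbar_opp 0) by (cbn; f_equal; ring).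
    exact (proj1 (is_lim_seq_opp _ _) hab).
  - apply (is_lim_seq_ext (fun n => b n + (a n - b n))); [intro; ring|].
    exact (is_lim_seq_plus _ _ l 0 l hlim hab hl).
Qed.

Lemma is_lim_seq_geom_dominated (a : nat -> R) (C q : R) :
  0 <= q < 1 -> (forall n, Rabs (a n) <= C * q ^ n) -> is_lim_seq a 0.
Proof.
  intros hq ha. apply is_lim_seq_abs_0.
  apply (is_lim_seq_le_le (fun _ => 0) _ (fun n => C * q ^ n)).
  - intro n. split; [apply Rabs_pos|apply ha].
  - apply is_lim_seq_const.
  - replace (Finite 0) with (Rbar_mult C 0) by (cbn; f_equal; ring).
    apply is_lim_seq_scal_l, is_lim_seq_geom. rewrite Rabs_pos_eq; lra.
Qed.

Lemma Rpower_1_l (y : R) : Rpower 1 y = 1.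
Proof. unfold Rpower. rewrite ln_1, Rmult_0_r. apply exp_0. Qed.

Lemma Rpower_Rinv_l (x y : R) : 0 < x -> Rpower (/ x) y = Rpower x (- y).
Proof. intro hx. unfold Rpower. rewrite ln_Rinv by exact hx. f_equal. ring. Qed.

Lemma Rpower_pow_l (x y : R) (n : nat) : 0 < x -> Rpower (x ^ n) y = Rpower x y ^ n.
Proof.
  intro hx. rewrite <- Rpower_pow, <- Rpower_pow by (auto; apply exp_pos).
  rewrite !Rpower_mult. f_equal. ring.
Qed.

(* [npow b m] is [m^b] with [0^b = 0]; note that [Rpower 0 b = 1]. *)
Definition npow (b : R) (m : nat) : R :=
  match m with O => 0 | S _ => Rpower (INR m) b end.

Lemma npow_Rpower (b : R) (m : nat) : (1 <= m)%nat -> npow b m = Rpower (INR m) b.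
Proof. intro hm. destruct m; [lia|reflexivity]. Qed.

Definition npow_step (b : R) (m : nat) : R := npow b m - npow b (m - 1).

Lemma npow_step_0 (b : R) : npow_step b 0 = 0.
Proof. unfold npow_step. simpl. ring. Qed.

Lemma npow_le (b : R) (m N : nat) : 0 <= b -> (m <= N)%nat -> npow b m <= npow b N.
Proof.
  intros hb hmN. destruct m as [|m'], N as [|N']; try lia; unfold npow.
  - lra.
  - left. apply exp_pos.
  - apply Rle_Rpower_l; [exact hb|]. split.
    + apply lt_0_INR. lia.
    + apply le_INR. exact hmN.
Qed.

Lemma Rpower_opp_le_npow_step (s : R) (m : nat) : 0 < s < 1 -> (1 <= m)%nat ->
  Rpower (INR m) (- s) <= npow_step (1 - s) m / (1 - s).
Proof.
  intros hs hm. unfold npow_step. destruct m as [|[|m']]; [lia| |].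
  - simpl. rewrite !Rpower_1_l, Rminus_0_r.
    unfold Rdiv. rewrite Rmult_1_l, <- Rinv_1 at 1. apply Rinv_le_contravar; lra.
  - set (m := S (S m')). replace (m - 1)%nat with (S m') by (unfold m; lia).
    change (npow (1 - s) m) with (Rpower (INR m) (1 - s)).
    change (npow (1 - s) (S m')) with (Rpower (INR (S m')) (1 - s)).
    assert (hm1 : INR (S m') = INR m - 1) by (unfold m; rewrite (S_INR (S m')); ring).
    assert (hpos : 0 < INR m - 1) by (rewrite <- hm1; apply lt_0_INR; lia).
    destruct (MVT_cor2 (fun t => Rpower t (1 - s)) (fun t => (1 - s) * Rpower t (1 - s - 1))
                (INR m - 1) (INR m) ltac:(lra)) as (c & hdiff & hc).
    { intros c hc. apply derivable_pt_lim_power. lra. }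
    rewrite hm1, hdiff. replace (1 - s - 1) with (- s) by ring.
    replace ((1 - s) * Rpower c (- s) * (INR m - (INR m - 1)) / (1 - s))
      with (Rpower c (- s)) by (field; lra).
    rewrite !Rpower_Ropp. apply Rinv_le_contravar; [apply exp_pos|].
    apply Rle_Rpower_l; lra.
Qed.

Lemma sum_npow_step_dist (b : R) (k N : nat) : (k <= N)%nat ->
  sum_n_m (fun l => npow_step b (k - l) + npow_step b (l - k)) 0 N
    = npow b (N - k) + npow b k :> R.
Proof.
  intro hkN.
  (* Thanks to truncated subtraction, [H (S l) - H l] is the summand for every [l],
     whether [l < k], [l = k] or [l > k]. *)
  set (H l := npow b (l - 1 - k) - npow b (k - l)).
  assert (hstep : forall l, npow_step b (k - l) + npow_step b (l - k) = H (S l) - H l).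
  { intro l. unfold H, npow_step.
    replace (S l - 1 - k)%nat with (l - k)%nat by lia.
    replace (k - S l)%nat with (k - l - 1)%nat by lia.
    replace (l - 1 - k)%nat with (l - k - 1)%nat by lia. ring. }
  rewrite (sum_n_m_ext _ _ _ _ hstep), sum_n_m_telescope. unfold H.
  replace (S N - 1 - k)%nat with (N - k)%nat by lia.
  replace (k - S N)%nat with 0%nat by lia. rewrite Nat.sub_0_r. simpl. ring.
Qed.

Lemma Rpower_dist_le_npow_step (s : R) (k l : nat) : 0 < s < 1 -> k <> l ->
  Rpower (Rabs (INR k - INR l)) (- s)
    <= (npow_step (1 - s) (k - l) + npow_step (1 - s) (l - k)) / (1 - s).
Proof.
  intros hs hkl.
  assert (hlt : forall a b : nat, (a < b)%nat ->
    Rpower (Rabs (INR a - INR b)) (- s)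
      <= (npow_step (1 - s) (a - b) + npow_step (1 - s) (b - a)) / (1 - s)).
  { intros a b hab. replace (a - b)%nat with 0%nat by lia.
    rewrite npow_step_0, Rplus_0_l, Rabs_minus_sym, <- minus_INR by lia.
    rewrite Rabs_pos_eq by apply pos_INR.
    apply Rpower_opp_le_npow_step; [exact hs|lia]. }
  destruct (proj1 (Nat.lt_gt_cases k l) hkl) as [hkl'|hlk].
  - exact (hlt k l hkl').
  - rewrite Rabs_minus_sym, Rplus_comm. exact (hlt l k hlk).
Qed.

Lemma Rabs_mean_RInt_sub_le (f : R -> R) (a b c M : R) : a < b -> ex_RInt f a b ->
  (forall t, a <= t <= b -> Rabs (f t - c) <= M) ->
  Rabs (/ (b - a) * RInt f a b - c) <= M.
Proof.
  intros hab hf hM.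
  assert (hint : Rabs (RInt (fun t => f t - c) a b) <= (b - a) * M).
  { apply abs_RInt_le_const; [lra| |exact hM].
    exact (ex_RInt_minus (V := R_CompleteNormedModule) f (fun _ => c) a b hf
             (ex_RInt_const _ _ _)). }
  rewrite (RInt_minus f (fun _ => c)), RInt_const in hint by (auto; apply ex_RInt_const).
  change (scal (b - a) c) with ((b - a) * c) in hint.
  replace (/ (b - a) * RInt f a b - c) with (/ (b - a) * (RInt f a b - (b - a) * c))
    by (field; lra).
  rewrite Rabs_mult, Rabs_pos_eq by (left; apply Rinv_0_lt_compat; lra).
  apply Rmult_le_reg_l with (b - a); [lra|].
  rewrite <- Rmult_assoc, Rinv_r, Rmult_1_l by lra. exact hint.
Qed.

Definition clamp01 (t : R) : R := Rmax 0 (Rmin t 1).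

Lemma clamp01_in (t : R) : 0 <= clamp01 t <= 1.
Proof. unfold clamp01, Rmax, Rmin. repeat destruct Rle_dec; lra. Qed.

Lemma clamp01_id (t : R) : 0 <= t <= 1 -> clamp01 t = t.
Proof. unfold clamp01, Rmax, Rmin. repeat destruct Rle_dec; lra. Qed.

Lemma clamp01_lipschitz (a b : R) : Rabs (clamp01 a - clamp01 b) <= Rabs (a - b).
Proof.
  unfold clamp01, Rmax, Rmin, Rabs.
  repeat destruct Rle_dec; repeat destruct Rcase_abs; lra.
Qed.

Section Lipschitz01.

Variables (u : R -> R) (L : R).
Hypothesis hu : forall x y, 0 <= x <= 1 -> 0 <= y <= 1 -> Rabs (u x - u y) <= L * Rabs (x - y).

Lemma lipschitz01_nonneg : 0 <= L.
Proof.
  assert (h := hu 0 1 ltac:(lra) ltac:(lra)).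
  rewrite Rminus_0_l, Rabs_Ropp, Rabs_R1, Rmult_1_r in h.
  eapply Rle_trans; [apply Rabs_pos|exact h].
Qed.

(* [continuous] is two-sided while [u] is only controlled on [0,1], hence the clamp. *)
Lemma continuous_clamp01 (z : R) : continuous (fun t => u (clamp01 t)) z.
Proof.
  apply filterlim_locally. intro eps.
  assert (hL := lipschitz01_nonneg).
  assert (hd : 0 < eps / (L + 1)) by (apply Rdiv_lt_0_compat; [apply cond_pos|lra]).
  exists (mkposreal _ hd). intros y hy.
  change (Rabs (y - z) < eps / (L + 1)) in hy.
  change (Rabs (u (clamp01 y) - u (clamp01 z)) < eps).
  eapply Rle_lt_trans; [apply hu; apply clamp01_in|].
  eapply Rle_lt_trans; [apply Rmult_le_compat_l; [exact hL|apply clamp01_lipschitz]|].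
  apply Rle_lt_trans with ((L + 1) * Rabs (y - z)).
  - apply Rmult_le_compat_r; [apply Rabs_pos|lra].
  - apply (Rmult_lt_compat_l (L + 1)) in hy; [|lra].
    replace ((L + 1) * (eps / (L + 1))) with (pos eps) in hy by (field; lra). exact hy.
Qed.

Lemma ex_RInt_lipschitz01 (a b : R) : 0 <= a -> a <= b -> b <= 1 -> ex_RInt u a b.
Proof.
  intros ha hab hb. apply (ex_RInt_ext (fun t => u (clamp01 t))).
  - intros t ht. rewrite Rmin_left, Rmax_right in ht by lra.
    rewrite clamp01_id by lra. reflexivity.
  - apply (ex_RInt_continuous (V := R_CompleteNormedModule)).
    intros z _. apply continuous_clamp01.
Qed.

Lemma U_bounds (n : nat) (x : R) : 0 <= x <= 1 ->
  0 <= Ulo n x /\ x - hw n <= Ulo n x /\ Ulo n x < Uhi n x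
  /\ Uhi n x <= 1 /\ Uhi n x <= x + hw n /\ Uhi n x - Ulo n x <= 2 * hw n.
Proof.
  intro hx.
  assert (hh : 0 < hw n) by (apply Rinv_0_lt_compat, pow_lt; lra).
  unfold Ulo, Uhi, Rmax, Rmin. repeat destruct Rle_dec; repeat split; lra.
Qed.

Lemma Avg_sub_le (n : nat) (x : R) : 0 <= x <= 1 -> Rabs (Avg n u x - u x) <= L * hw n.
Proof.
  intro hx. destruct (U_bounds n x hx) as (hlo & hlo' & hlohi & hhi & hhi' & _).
  unfold Avg, mu. rewrite Rmax_left by lra.
  apply Rabs_mean_RInt_sub_le; [lra|apply ex_RInt_lipschitz01; lra|].
  intros t ht. eapply Rle_trans; [apply hu; lra|].
  apply Rmult_le_compat_l; [apply lipschitz01_nonneg|].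
  apply Rabs_le. lra.
Qed.

End Lipschitz01.

Lemma Rabs_sqr_sub_le (a b e c : R) :
  Rabs (a - b) <= e -> Rabs b <= c -> e <= c -> Rabs (a ^ 2 - b ^ 2) <= 3 * e * c.
Proof.
  intros hab hb hec.
  assert (hsum : Rabs (a + b) <= 3 * c).
  { replace (a + b) with ((a - b) + 2 * b) by ring.
    eapply Rle_trans; [apply Rabs_triang|].
    rewrite Rabs_mult, (Rabs_pos_eq 2) by lra. lra. }
  replace (a ^ 2 - b ^ 2) with ((a - b) * (a + b)) by ring.
  rewrite Rabs_mult. replace (3 * e * c) with (e * (3 * c)) by ring.
  apply Rmult_le_compat; auto using Rabs_pos.
Qed.

Lemma hw_double (n : nat) : 2 * hw n = / 2 ^ n.
Proof. unfold hw. simpl. field. apply pow_nonzero. lra. Qed.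

Lemma INR_pow2 (n : nat) : INR (2 ^ n) = 2 ^ n.
Proof. rewrite pow_INR. reflexivity. Qed.

Lemma vpt_in (n k : nat) : (k <= 2 ^ n)%nat -> 0 <= vpt n k <= 1.
Proof.
  intro hk. unfold vpt. assert (hp : 0 < 2 ^ n) by (apply pow_lt; lra).
  apply le_INR in hk. rewrite INR_pow2 in hk.
  split; [apply Rdiv_le_0_compat; [apply pos_INR|lra]|].
  apply Rmult_le_reg_r with (2 ^ n); [lra|].
  unfold Rdiv. rewrite Rmult_assoc, Rinv_l; lra.
Qed.

Lemma Rabs_vpt_sub (n k l : nat) :
  Rabs (vpt n k - vpt n l) = Rabs (INR k - INR l) * / 2 ^ n.
Proof.
  unfold vpt, Rdiv. rewrite <- Rmult_minus_distr_r, Rabs_mult.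
  rewrite (Rabs_pos_eq (/ _)); [reflexivity|].
  left. apply Rinv_0_lt_compat, pow_lt. lra.
Qed.

Lemma Rabs_INR_sub_ge1 (k l : nat) : k <> l -> 1 <= Rabs (INR k - INR l).
Proof.
  intro hkl. destruct (proj1 (Nat.lt_gt_cases k l) hkl) as [h|h]; apply le_INR in h;
    rewrite S_INR in h; [rewrite Rabs_left1|rewrite Rabs_pos_eq]; lra.
Qed.

Definition energy_term (r : nat -> etype -> R) (n : nat) (f : R -> R) (k l : nat) : R :=
  (f (vpt n k) - f (vpt n l)) ^ 2 * jker r n (vpt n k) (vpt n l)
    * mu n (vpt n k) * mu n (vpt n l).

Lemma Energy_sum_energy_term (r : nat -> etype -> R) (n : nat) (f : R -> R) :
  Energy r n f = sum_n_m (fun k => sum_n_m (energy_term r n f k) 0 (2 ^ n)) 0 (2 ^ n).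
Proof. reflexivity. Qed.

Lemma mu_le (n : nat) (x : R) : 0 <= x <= 1 -> 0 <= mu n x <= / 2 ^ n.
Proof.
  intro hx. destruct (U_bounds n x hx) as (_ & _ & hlohi & _ & _ & hlen).
  rewrite <- hw_double. unfold mu. rewrite Rmax_left; lra.
Qed.

(* Weakening [m^(-2s)] to [m^(-s)] keeps the exponent above [-1], so that the row sums of
   the energy difference grow only like [N^(1-s)], for every [s < 1]. *)
Lemma Rpower_grid_dist_le (s m X : R) : 0 <= s -> 1 <= m -> 0 < X ->
  m * / X * Rpower (m * / X) (-1 - 2 * s) * (/ X) ^ 3 <= Rpower m (- s) * Rpower X (2 * s - 3).
Proof.
  intros hs hm hX. assert (hX' : 0 < / X) by (apply Rinv_0_lt_compat; exact hX).
  rewrite <- (Rpower_1 (m * / X)) at 1 by nra. rewrite <- Rpower_plus.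
  replace (1 + (-1 - 2 * s)) with (- 2 * s) by ring.
  rewrite <- Rpower_mult_distr, Rmult_assoc by lra.
  apply Rmult_le_compat.
  - left. apply exp_pos.
  - apply Rmult_le_pos; [left; apply exp_pos|apply pow_le; lra].
  - apply Rle_Rpower; lra.
  - rewrite <- (Rpower_pow 3 (/ X)), <- Rpower_plus, Rpower_Rinv_l by assumption.
    right. f_equal. simpl. ring.
Qed.

Section EnergyComparison.

Variables (r : nat -> etype -> R) (s Lam L : R) (u : R -> R).
Hypothesis hs : 0 < s < 1.
Hypothesis hLam : 0 < Lam.
Hypothesis hJ : forall n k l : nat, (k <= 2 ^ n)%nat -> (l <= 2 ^ n)%nat -> k <> l ->
  0 < jker r n (vpt n k) (vpt n l) /\
  jker r n (vpt n k) (vpt n l) <= Lam * Rpower (Rabs (vpt n k - vpt n l)) (-1 - 2 * s).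
Hypothesis hu : forall x y, 0 <= x <= 1 -> 0 <= y <= 1 -> Rabs (u x - u y) <= L * Rabs (x - y).

Lemma energy_term_Avg_sub_le_dist (n k l : nat) :
  (k <= 2 ^ n)%nat -> (l <= 2 ^ n)%nat -> k <> l ->
  Rabs (energy_term r n (Avg n u) k l - energy_term r n u k l)
    <= 3 * L ^ 2 * Lam * Rpower (2 ^ n) (2 * s - 3) * Rpower (Rabs (INR k - INR l)) (- s).
Proof.
  intros hk hl hkl.
  assert (hL := lipschitz01_nonneg u L hu).
  assert (hX : 0 < 2 ^ n) by (apply pow_lt; lra).
  assert (hx := vpt_in n k hk). assert (hy := vpt_in n l hl).
  assert (hm : 1 <= Rabs (INR k - INR l)) by (apply Rabs_INR_sub_ge1; exact hkl).
  assert (hd := Rabs_vpt_sub n k l).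
  destruct (hJ n k l hk hl hkl) as [hJpos hJle].
  destruct (mu_le n _ hx) as [hmx hmx']. destruct (mu_le n _ hy) as [hmy hmy'].
  unfold energy_term.
  set (x := vpt n k) in *. set (y := vpt n l) in *. set (h := / 2 ^ n) in *.
  set (m := Rabs (INR k - INR l)) in *. set (J := jker r n x y) in *.
  assert (hh : 0 < h) by (apply Rinv_0_lt_compat; exact hX).
  rewrite hd in hJle.
  assert (hsq : Rabs ((Avg n u x - Avg n u y) ^ 2 - (u x - u y) ^ 2)
                  <= 3 * (L * h) * (L * (m * h))).
  { apply Rabs_sqr_sub_le.
    - replace (_ - _) with ((Avg n u x - u x) + - (Avg n u y - u y)) by ring.
      eapply Rle_trans; [apply Rabs_triang|]. rewrite Rabs_Ropp.
      assert (hax := Avg_sub_le u L hu n x hx). assert (hay := Avg_sub_le u L hu n y hy).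
      unfold h. rewrite <- hw_double. lra.
    - rewrite <- hd. apply hu; assumption.
    - apply Rmult_le_compat_l; nra. }
  replace (_ - _)
    with (((Avg n u x - Avg n u y) ^ 2 - (u x - u y) ^ 2) * (J * mu n x * mu n y)) by ring.
  rewrite Rabs_mult, (Rabs_pos_eq (J * mu n x * mu n y)) by (apply Rmult_le_pos; [|lra]; nra).
  eapply Rle_trans.
  { apply Rmult_le_compat; [apply Rabs_pos|apply Rmult_le_pos; [|lra]; nra|exact hsq|].
    apply Rmult_le_compat; [nra|exact hmy| |exact hmy'].
    apply Rmult_le_compat; [lra|exact hmx|exact hJle|exact hmx']. }
  apply Rle_trans with (3 * L ^ 2 * Lam * (m * h * Rpower (m * h) (-1 - 2 * s) * h ^ 3)).
  { right. ring. }
  replace (3 * L ^ 2 * Lam * Rpower (2 ^ n) (2 * s - 3) * Rpower m (- s))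
    with (3 * L ^ 2 * Lam * (Rpower m (- s) * Rpower (2 ^ n) (2 * s - 3))) by ring.
  apply Rmult_le_compat_l; [apply Rmult_le_pos; nra|].
  apply Rpower_grid_dist_le; lra.
Qed.

Lemma energy_term_Avg_sub_le (n k l : nat) : (k <= 2 ^ n)%nat -> (l <= 2 ^ n)%nat ->
  Rabs (energy_term r n (Avg n u) k l - energy_term r n u k l)
    <= 3 * L ^ 2 * Lam * Rpower (2 ^ n) (2 * s - 3) / (1 - s)
       * (npow_step (1 - s) (k - l) + npow_step (1 - s) (l - k)).
Proof.
  intros hk hl. destruct (Nat.eq_dec k l) as [<-|hkl].
  - unfold energy_term. rewrite Nat.sub_diag, npow_step_0.
    replace (_ - _) with 0 by ring. rewrite Rabs_R0. lra.
  - eapply Rle_trans; [apply energy_term_Avg_sub_le_dist; assumption|].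
    set (C := 3 * L ^ 2 * Lam * Rpower (2 ^ n) (2 * s - 3)).
    set (S := npow_step (1 - s) (k - l) + npow_step (1 - s) (l - k)).
    replace (C / (1 - s) * S) with (C * (S / (1 - s))) by (field; lra).
    apply Rmult_le_compat_l; [|apply Rpower_dist_le_npow_step; assumption].
    apply Rmult_le_pos; [nra|left; apply exp_pos].
Qed.

Lemma Rabs_Energy_Avg_sub_le (n : nat) :
  Rabs (Energy r n (Avg n u) - Energy r n u)
    <= 12 * L ^ 2 * Lam / (1 - s) * Rpower 2 (s - 1) ^ n.
Proof.
  set (N := (2 ^ n)%nat). set (X := 2 ^ n).
  assert (hX : 1 <= X) by (apply pow_R1_Rle; lra).
  set (K := 3 * L ^ 2 * Lam * Rpower X (2 * s - 3) / (1 - s)).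
  assert (hK : 0 <= K).
  { unfold K. apply Rdiv_le_0_compat; [|lra].
    apply Rmult_le_pos; [nra|left; apply exp_pos]. }
  assert (hrow : forall k, (k <= N)%nat ->
    Rabs (sum_n_m (energy_term r n (Avg n u) k) 0 N - sum_n_m (energy_term r n u k) 0 N)
      <= 2 * K * npow (1 - s) N).
  { intros k hk.
    eapply Rle_trans.
    { apply (Rabs_sum_n_m_sub_le _ _
        (fun l => K * (npow_step (1 - s) (k - l) + npow_step (1 - s) (l - k)))).
      intros l hl. apply energy_term_Avg_sub_le; assumption. }
    rewrite (sum_n_m_mult_l (K := R_Ring)). change mult with Rmult.
    rewrite sum_npow_step_dist by exact hk.
    assert (h1 := npow_le (1 - s) (N - k) N ltac:(lra) ltac:(lia)).
    assert (h2 := npow_le (1 - s) k N ltac:(lra) hk).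
    nra. }
  rewrite !Energy_sum_energy_term.
  eapply Rle_trans.
  { apply (Rabs_sum_n_m_sub_le _ _ (fun _ => 2 * K * npow (1 - s) N)). exact hrow. }
  assert (hN : (1 <= N)%nat) by (apply Nat.le_succ_l, Nat.neq_0_lt_0, Nat.pow_nonzero; lia).
  rewrite sum_n_m_const, Nat.sub_0_r, S_INR, npow_Rpower by exact hN.
  unfold N. rewrite INR_pow2. fold X.
  assert (hexp : Rpower X (2 * s - 3) * Rpower X (1 - s) * X = Rpower X (s - 1)).
  { rewrite <- (Rpower_1 X) at 3 by lra. rewrite <- !Rpower_plus. f_equal. ring. }
  rewrite <- (Rpower_pow_l 2 (s - 1) n) by lra. fold X. rewrite <- hexp.
  apply Rle_trans with (2 * X * (2 * K * Rpower X (1 - s))).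
  - apply Rmult_le_compat_r; [|lra].
    apply Rmult_le_pos; [lra|left; apply exp_pos].
  - right. unfold K. field. lra.
Qed.

End EnergyComparison.

Theorem lemma4p14 (r : nat -> etype -> R) (s : R)
  (hs : 0 < s < 1)
  (hr_pos : forall i t, edge_exists i t -> 0 < r i t)
  (hr_eq : forall i, (1 <= i)%nat -> r i Eodd = r i Eodd')
  (hub : kernel_upper_bound r s)
  (u : R -> R) (hu : Lip01 u) :
  forall l : Rbar,
    is_lim_seq (fun n => Energy r n (Avg n u)) l <->
    is_lim_seq (fun n => Energy r n u) l.
Proof.
  intro l. destruct hub as (Lam & hLam & hJ). destruct hu as (L & hL).
  apply is_lim_seq_sub_0_iff.
  apply (is_lim_seq_geom_dominated _ (12 * L ^ 2 * Lam / (1 - s)) (Rpower 2 (s - 1))).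
  - split; [left; apply exp_pos|].
    apply Rlt_le_trans with (Rpower 2 0); [apply Rpower_lt; lra|rewrite Rpower_O; lra].
  - exact (Rabs_Energy_Avg_sub_le r s Lam L u hs hLam hJ hL).
Qed.
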